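(* Let $n_{\mathrm{pot}},n_{\mathrm{kin}},m,\ell\in\mathbb{N}_0$, let $U_{\mathrm{pos}}\subset\mathbb{R}^{n_{\mathrm{pot}}}$ be open, and let $A:U_{\mathrm{pos}}\to\mathbb{R}^{\ell\times n_{\mathrm{kin}}}$, $B:U_{\mathrm{pos}}\to\mathbb{R}^{n_{\mathrm{kin}}\times m}$, $G:\mathbb{R}^{n_{\mathrm{kin}}}\to\mathbb{R}^{n_{\mathrm{kin}}\times n_{\mathrm{kin}}}$, $Z:U_{\mathrm{pos}}\to\mathbb{R}^{n_{\mathrm{pot}}\times n_{\mathrm{kin}}}$ be continuous. Assume that $A$ has constant rank on $U_{\mathrm{pos}}$ and that $G(\bm{\Gamma})$ is skew-symmetric for all $\bm{\Gamma}\in\mathbb{R}^{n_{\mathrm{kin}}}$. Set $N=n_{\mathrm{pot}}+2n_{\mathrm{kin}}+m$. For $(\bm{\zeta},\bm{\Gamma})\in U_{\mathrm{pos}}\times\mathbb{R}^{n_{\mathrm{kin}}}$ let $\mathcal{D}_{(\bm{\zeta},\bm{\Gamma})}\subset\mathbb{R}^N\times\mathbb{R}^N$ be the set of all pairs of a flow $f=(\bm{\varpi}_{\mathcal{L},f},\bm{\tau}_{\mathcal{L},f},\bm{\varpi}_{\mathcal{R}},\bm{\varpi}_{\mathrm{ext}})\in\mathbb{R}^{n_{\mathrm{pot}}}\times\mathbb{R}^{n_{\mathrm{kin}}}\times\mathbb{R}^{n_{\mathrm{kin}}}\times\mathbb{R}^m$ and an effort $e=(\bm{\tau}_{\mathcal{L},e},\bm{\varpi}_{\mathcal{L},e},\bm{\tau}_{\mathcal{R}},\bm{\tau}_{\mathrm{ext}})\in\mathbb{R}^{n_{\mathrm{pot}}}\times\mathbb{R}^{n_{\mathrm{kin}}}\times\mathbb{R}^{n_{\mathrm{kin}}}\times\mathbb{R}^m$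 such that $\bm{\varpi}_{\mathcal{L},f}=Z(\bm{\zeta})\bm{\varpi}_{\mathcal{L},e}$, $\bm{\varpi}_{\mathcal{R}}=\bm{\varpi}_{\mathcal{L},e}$, $A(\bm{\zeta})\bm{\varpi}_{\mathcal{L},e}=0$, $\bm{\varpi}_{\mathrm{ext}}=B(\bm{\zeta})^\top\bm{\varpi}_{\mathcal{L},e}$, and there exists $\bm{\mu}\in\mathbb{R}^\ell$ with $\bm{\tau}_{\mathcal{L},f}+Z(\bm{\zeta})^\top\bm{\tau}_{\mathcal{L},e}+G(\bm{\Gamma})\bm{\varpi}_{\mathcal{L},e}+\bm{\tau}_{\mathcal{R}}+B(\bm{\zeta})\bm{\tau}_{\mathrm{ext}}+A(\bm{\zeta})^\top\bm{\mu}=0$. Then the family $(\mathcal{D}_{(\bm{\zeta},\bm{\Gamma})})_{(\bm{\zeta},\bm{\Gamma})\in U_{\mathrm{pos}}\times\mathbb{R}^{n_{\mathrm{kin}}}}$ is a modulated Dirac structure.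
   Context: A subspace $\mathcal{D}\subset\mathbb{R}^N\times\mathbb{R}^N$ is a Dirac structure if for all $f,e\in\mathbb{R}^N$: $(f,e)\in\mathcal{D}$ if and only if $\hat f^\top e+f^\top\hat e=0$ for all $(\hat f,\hat e)\in\mathcal{D}$. For $U\subset\mathbb{R}^k$ open, a family $(\mathcal{D}_x)_{x\in U}$ of subspaces of $\mathbb{R}^N\times\mathbb{R}^N$ is a modulated Dirac structure if for every $x\in U$: (a) $\mathcal{D}_x$ is a Dirac structure, and (b) there exist a neighborhood $U_x\subset U$ of $x$ and a family $(T_y)_{y\in U_x}$ of linear bijective maps $T_y:\mathbb{R}^N\to\mathcal{D}_y$ such that for every $z\in\mathbb{R}^N$ the map $y\mapsto T_yz$ from $U_x$ to $\mathbb{R}^N\times\mathbb{R}^N$ is continuous. Here the modulating parameter $(\bm{\zeta},\bm{\Gamma})$ ranges over the open set $U_{\mathrm{pos}}\times\mathbb{R}^{n_{\mathrm{kin}}}\subset\mathbb{R}^{n_{\mathrm{pot}}+n_{\mathrm{kin}}}$. *)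

(* R : realType, vectors in R^n are column vectors 'cV[R]_n,
   with the product (sup-norm) topology on matrices from matrix_normedtype. *)
From HB Require Import structures.
From mathcomp Require Import all_boot all_order all_algebra.
From mathcomp Require Import all_classical all_reals all_analysis.
Set Implicit Arguments. Unset Strict Implicit. Unset Printing Implicit Defensive.
Import Order.TTheory GRing.Theory Num.Theory.
Import numFieldNormedType.Exports.
Local Open Scope classical_set_scope.
Local Open Scope ring_scope.

Definition is_subspace (R : realType) (N : nat) (D : set ('cV[R]_N * 'cV[R]_N)) :=
  D (0, 0) /\
  (forall p q, D p -> D q -> D (p.1 + q.1, p.2 + q.2)) /\
  (forall (a : R) p, D p -> D (a *: p.1, a *: p.2)).

Definition dirac_structure (R : realType) (N : nat) (D : set ('cV[R]_N * 'cV[R]_N)) :=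
  is_subspace D /\
  forall f e : 'cV[R]_N,
    D (f, e) <-> (forall fh eh, D (fh, eh) -> fh^T *m e + f^T *m eh = 0).

Definition modulated_dirac (R : realType) (k N : nat) (U : set 'cV[R]_k)
    (D : 'cV[R]_k -> set ('cV[R]_N * 'cV[R]_N)) :=
  forall x, U x ->
    dirac_structure (D x) /\
    exists (Ux : set 'cV[R]_k) (T : 'cV[R]_k -> 'cV[R]_N -> 'cV[R]_N * 'cV[R]_N),
      [/\ open Ux, Ux x, Ux `<=` U &
       (forall y, Ux y ->
          [/\ (forall (a : R) z1 z2,
                 T y (a *: z1 + z2) = (a *: (T y z1).1 + (T y z2).1,
                                       a *: (T y z1).2 + (T y z2).2)),
              (forall z, D y (T y z)),
              (forall z1 z2, T y z1 = T y z2 -> z1 = z2) &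
              (forall p, D y p -> exists z, T y z = p)]) /\
       (forall z, {within Ux, continuous (fun y => T y z)})].

(* Block projections of a vector in R^(npot + nkin + nkin + m). *)
Section Blocks.
Variables (R : realType) (a b c d : nat).
Definition blk1 (v : 'cV[R]_(a + b + c + d)) : 'cV[R]_a := usubmx (usubmx (usubmx v)).
Definition blk2 (v : 'cV[R]_(a + b + c + d)) : 'cV[R]_b := dsubmx (usubmx (usubmx v)).
Definition blk3 (v : 'cV[R]_(a + b + c + d)) : 'cV[R]_c := dsubmx (usubmx v).
Definition blk4 (v : 'cV[R]_(a + b + c + d)) : 'cV[R]_d := dsubmx v.
End Blocks.

Definition port_D (R : realType) (npot nkin m l : nat)
    (A : 'cV[R]_npot -> 'M[R]_(l, nkin)) (B : 'cV[R]_npot -> 'M[R]_(nkin, m))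
    (G : 'cV[R]_nkin -> 'M[R]_nkin) (Z : 'cV[R]_npot -> 'M[R]_(npot, nkin))
    (zeta : 'cV[R]_npot) (Gam : 'cV[R]_nkin)
    (fe : 'cV[R]_(npot + nkin + nkin + m) * 'cV[R]_(npot + nkin + nkin + m)) : Prop :=
  let f := fe.1 in let e := fe.2 in
  [/\ blk1 f = Z zeta *m blk2 e,
      blk3 f = blk2 e,
      A zeta *m blk2 e = 0,
      blk4 f = (B zeta)^T *m blk2 e &
      exists mu : 'cV[R]_l,
        blk2 f + (Z zeta)^T *m blk1 e + G Gam *m blk2 e + blk3 e
          + B zeta *m blk4 e + (A zeta)^T *m mu = 0].

(* Pointwise, every element of D is
     f = (Z w, -(Z^T t + G w + tR + B tx + A^T mu), w, B^T w),  e = (t, w, tR, tx)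
   with A w = 0. Pairing such an element with an arbitrary (f, e) leaves, thanks
   to G^T = -G, exactly the defects of the equations defining D, each paired with
   a free parameter; hence D is its own orthogonal, which is always a subspace.
   For the trivialisation pick S such that S A(zeta0) is a row basis of A(zeta0).
   By constant rank, C = S A(zeta) still spans the row space of A(zeta) as long
   as the Gram matrix C C^T is invertible, an open condition, and then
   Q = C^T (C C^T)^-1 C is the orthogonal projection onto the range of A(zeta)^T,
   continuous in zeta. *)

From HB Require Import structures.
From mathcomp Require Import all_boot all_order all_algebra.
From mathcomp Require Import all_classical all_reals all_analysis.
From mathcomp Require Import ring lra.
Set Implicit Arguments. Unset Strict Implicit. Unset Printing Implicit Defensive.
Import Order.TTheory GRing.Theory Num.Theory.
Import numFieldNormedType.Exports.
Local Open Scope classical_set_scope.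
Local Open Scope ring_scope.

Section Dot.
Variable R : realFieldType.

Definition dot n (u v : 'cV[R]_n) : R := (u^T *m v) 0 0.

Lemma dotC n (u v : 'cV[R]_n) : dot u v = dot v u.
Proof. by rewrite /dot !mxE; apply: eq_bigr => i _; rewrite !mxE mulrC. Qed.

Lemma dotDl n (u v w : 'cV[R]_n) : dot (u + v) w = dot u w + dot v w.
Proof. by rewrite /dot linearD /= mulmxDl mxE. Qed.

Lemma dotDr n (u v w : 'cV[R]_n) : dot w (u + v) = dot w u + dot w v.
Proof. by rewrite /dot mulmxDr mxE. Qed.

Lemma dotNl n (u w : 'cV[R]_n) : dot (- u) w = - dot u w.
Proof. by rewrite /dot linearN /= mulNmx mxE. Qed.

Lemma dotNr n (u w : 'cV[R]_n) : dot w (- u) = - dot w u.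
Proof. by rewrite /dot mulmxN mxE. Qed.

Lemma dot0l n (w : 'cV[R]_n) : dot 0 w = 0.
Proof. by rewrite /dot trmx0 mul0mx mxE. Qed.

Lemma dot0r n (w : 'cV[R]_n) : dot w 0 = 0.
Proof. by rewrite /dot mulmx0 mxE. Qed.

Lemma dotMl n p (M : 'M[R]_(p, n)) (u : 'cV[R]_n) (v : 'cV[R]_p) :
  dot (M *m u) v = dot u (M^T *m v).
Proof. by rewrite /dot trmx_mul mulmxA. Qed.

Lemma dot_self_eq0 n (u : 'cV[R]_n) : (dot u u == 0) = (u == 0).
Proof.
apply/idP/eqP => [|->]; last by rewrite dot0l.
rewrite /dot mxE psumr_eq0 => [/allP u0|i _]; last first.
  by rewrite !mxE -expr2 sqr_ge0.
apply/matrixP => i j; rewrite (ord1 j) !mxE.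
by have /(_ (mem_index_enum _)) := u0 i; rewrite !mxE mulf_eq0 orbb => /eqP.
Qed.

Lemma pairing_dotE n (f e f' e' : 'cV[R]_n) :
  (f'^T *m e + f^T *m e' = 0) <-> dot f' e + dot f e' = 0.
Proof.
have -> : dot f' e + dot f e' = (f'^T *m e + f^T *m e') 0 0.
  by rewrite /dot [RHS]mxE.
split=> [->|M0]; first by rewrite mxE.
by apply/matrixP => i j; rewrite !ord1 M0 mxE.
Qed.

Lemma orthogonal_ker_range l k (A : 'M[R]_(l, k)) (v : 'cV[R]_k) :
  (forall w, A *m w = 0 -> dot w v = 0) -> exists mu, v = A^T *m mu.
Proof.
move=> ker_orth_v.
suff /submxP[D vD] : (v^T <= A)%MS by exists D^T; rewrite -[v]trmxK vD trmx_mul.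
rewrite submxE; apply/eqP/trmx_inj/matrixP => j i; rewrite (ord1 i) trmx0 [RHS]mxE.
have := ker_orth_v (cokermx A *m delta_mx j 0).
rewrite mulmxA mulmx_coker mul0mx => /(_ erefl).
rewrite /dot trmx_mul trmx_delta -mulmxA -rowE mxE => <-.
by rewrite trmx_mul trmxK.
Qed.

Lemma gram_unit r k (C : 'M[R]_(r, k)) : (C *m C^T \in unitmx) = row_free C.
Proof.
apply/idP/idP => [|freeC].
  rewrite -row_free_unit /row_free => /eqP rkCC.
  by rewrite eqn_leq rank_leq_row -{1}rkCC mxrankM_maxl.
rewrite -row_free_unit -kermx_eq0; apply/eqP/row_matrixP => i; rewrite row0.
set u := row i _.
have uCC0 : u *m (C *m C^T) = 0 by apply/sub_kermxP; exact: row_sub.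
have : (u *m C)^T == 0.
  by rewrite -dot_self_eq0 /dot trmxK trmx_mul !mulmxA -(mulmxA u) uCC0 !mul0mx mxE.
by rewrite trmx_eq0 mulmx_free_eq0 // => /eqP.
Qed.

Lemma eqmx_gram_unit l k s (A : 'M[R]_(l, k)) (S : 'M[R]_(s, l)) :
  \rank A = s -> S *m A *m (S *m A)^T \in unitmx -> (A == S *m A)%MS.
Proof.
move=> rkA; rewrite gram_unit => /eqP rkSA.
by rewrite andbC; have [_ <-] := mxrank_leqif_eq (submxMl S A); rewrite rkSA rkA.
Qed.

End Dot.

Lemma orthogonal_subspace (R : realType) N (D : set ('cV[R]_N * 'cV[R]_N)) :
  (forall f e, D (f, e) <->
     (forall fh eh, D (fh, eh) -> fh^T *m e + f^T *m eh = 0)) ->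
  is_subspace D.
Proof.
move=> DE; split; [|split].
- by apply/DE => fh eh _; rewrite trmx0 mulmx0 mul0mx addr0.
- move=> [f1 e1] [f2 e2] /DE D1 /DE D2; apply/DE => fh eh Dh /=.
  by rewrite mulmxDr linearD mulmxDl addrACA (D1 _ _ Dh) (D2 _ _ Dh) addr0.
- move=> a [f e] /DE De; apply/DE => fh eh Dh /=.
  by rewrite -scalemxAr linearZ -scalemxAl -scalerDr (De _ _ Dh) scaler0.
Qed.

Section Blocks.
Variables (R : realType) (a b c d : nat).
Local Notation V := 'cV[R]_(a + b + c + d).

Definition col_mx4 (u1 : 'cV[R]_a) (u2 : 'cV[R]_b) (u3 : 'cV[R]_c)
  (u4 : 'cV[R]_d) : V := col_mx (col_mx (col_mx u1 u2) u3) u4.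

Lemma blk1_col_mx4 u1 u2 u3 u4 : blk1 (col_mx4 u1 u2 u3 u4) = u1.
Proof. by rewrite /blk1 !col_mxKu. Qed.

Lemma blk2_col_mx4 u1 u2 u3 u4 : blk2 (col_mx4 u1 u2 u3 u4) = u2.
Proof. by rewrite /blk2 !col_mxKu col_mxKd. Qed.

Lemma blk3_col_mx4 u1 u2 u3 u4 : blk3 (col_mx4 u1 u2 u3 u4) = u3.
Proof. by rewrite /blk3 col_mxKu col_mxKd. Qed.

Lemma blk4_col_mx4 u1 u2 u3 u4 : blk4 (col_mx4 u1 u2 u3 u4) = u4.
Proof. by rewrite /blk4 col_mxKd. Qed.

Definition blk_col_mx4 := (blk1_col_mx4, blk2_col_mx4, blk3_col_mx4, blk4_col_mx4).

Lemma col_mx4K (v : V) : col_mx4 (blk1 v) (blk2 v) (blk3 v) (blk4 v) = v.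
Proof. by rewrite /col_mx4 /blk1 /blk2 /blk3 /blk4 !vsubmxK. Qed.

Lemma col_mx4P (s : R) u1 u2 u3 u4 v1 v2 v3 v4 :
  s *: col_mx4 u1 u2 u3 u4 + col_mx4 v1 v2 v3 v4 =
  col_mx4 (s *: u1 + v1) (s *: u2 + v2) (s *: u3 + v3) (s *: u4 + v4).
Proof. by rewrite /col_mx4 !scale_col_mx !add_col_mx. Qed.

Lemma dot_col_mx4 u1 u2 u3 u4 (v : V) :
  dot (col_mx4 u1 u2 u3 u4) v =
  dot u1 (blk1 v) + dot u2 (blk2 v) + dot u3 (blk3 v) + dot u4 (blk4 v).
Proof. by rewrite -{1}(col_mx4K v) /dot /col_mx4 !tr_col_mx !mul_row_col !mxE. Qed.

End Blocks.

Section PortDirac.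
Variables (R : realType) (n k m l : nat).
Variables (A : 'M[R]_(l, k)) (B : 'M[R]_(k, m)) (G : 'M[R]_k) (Z : 'M[R]_(n, k)).
Local Notation V := 'cV[R]_(n + k + k + m).

Definition port_Dmx : set (V * V) :=
  port_D (fun=> A) (fun=> B) (fun=> G) (fun=> Z) 0 0.

Definition port_elt (t1 : 'cV[R]_n) (w tR : 'cV[R]_k) (tx : 'cV[R]_m)
    (lam : 'cV[R]_k) : V * V :=
  (col_mx4 (Z *m w) (- (Z^T *m t1 + G *m w + tR + B *m tx + lam)) w (B^T *m w),
   col_mx4 t1 w tR tx).

Lemma port_DmxP p : port_Dmx p <->
  exists t1 w tR tx mu, A *m w = 0 /\ p = port_elt t1 w tR tx (A^T *m mu).
Proof.
split=> [|[t1 [w [tR [tx [mu [Aw0 ->]]]]]]]; last first.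
  rewrite /port_Dmx /port_D /= !blk_col_mx4; split=> //.
  by exists mu; rewrite -!addrA addNr.
case: p => f e [/= f1E f3E Ae0 f4E [mu f2E]].
exists (blk1 e), (blk2 e), (blk3 e), (blk4 e), mu; split=> //.
rewrite /port_elt col_mx4K -[f]col_mx4K f1E f3E f4E; congr (col_mx4 _ _ _ _, _).
by apply/eqP; rewrite -subr_eq0 opprK !addrA f2E.
Qed.

Hypothesis skewG : G^T = - G.

Lemma port_elt_pairing t1 w tR tx lam (f e : V) :
  dot (port_elt t1 w tR tx lam).1 e + dot f (port_elt t1 w tR tx lam).2 =
  dot t1 (blk1 f - Z *m blk2 e) + dot tR (blk3 f - blk2 e)
  + dot tx (blk4 f - B^T *m blk2 e)
  + dot w (blk2 f + Z^T *m blk1 e + G *m blk2 e + blk3 e + B *m blk4 e)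
  - dot lam (blk2 e).
Proof.
rewrite /port_elt /= (dotC f) !dot_col_mx4.
rewrite !(dotDl, dotDr, dotNl, dotNr) !dotMl !trmxK skewG mulNmx dotNr.
lra.
Qed.

Lemma port_Dmx_dirac : dirac_structure port_Dmx.
Proof.
suff port_Dmx_orth f e : port_Dmx (f, e) <->
    (forall fh eh, port_Dmx (fh, eh) -> fh^T *m e + f^T *m eh = 0).
  by split=> //; apply: orthogonal_subspace.
split=> [[/= f1E f3E Ae0 f4E [mu]]|orth_fe].
  move/eqP; rewrite addr_eq0 => /eqP f2E fh eh /port_DmxP.
  move=> [t1 [w [tR [tx [muh [Aw0 [-> ->]]]]]]]; apply/pairing_dotE.
  rewrite port_elt_pairing f1E f3E f4E f2E !subrr !dot0r dotNr -dotMl Aw0.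
  by rewrite dotMl trmxK Ae0 !dot0r dot0l oppr0 !addr0.
have orth t1 w tR tx mu : A *m w = 0 ->
    dot t1 (blk1 f - Z *m blk2 e) + dot tR (blk3 f - blk2 e)
    + dot tx (blk4 f - B^T *m blk2 e)
    + dot w (blk2 f + Z^T *m blk1 e + G *m blk2 e + blk3 e + B *m blk4 e)
    - dot (A^T *m mu) (blk2 e) = 0.
  move=> Aw0; rewrite -port_elt_pairing; apply/pairing_dotE/orth_fe/port_DmxP.
  by exists t1, w, tR, tx, mu.
split=> /=.
- move: (orth (blk1 f - Z *m blk2 e) 0 0 0 0 (mulmx0 _ _)).
  rewrite mulmx0 !(dot0l, add0r, addr0, subr0) => /eqP.
  by rewrite dot_self_eq0 subr_eq0 => /eqP.
- move: (orth 0 0 (blk3 f - blk2 e) 0 0 (mulmx0 _ _)).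
  rewrite mulmx0 !(dot0l, add0r, addr0, subr0) => /eqP.
  by rewrite dot_self_eq0 subr_eq0 => /eqP.
- move: (orth 0 0 0 0 (A *m blk2 e) (mulmx0 _ _)).
  rewrite !(dot0l, add0r) dotMl trmxK => /eqP.
  by rewrite oppr_eq0 dot_self_eq0 => /eqP.
- move: (orth 0 0 0 (blk4 f - B^T *m blk2 e) 0 (mulmx0 _ _)).
  rewrite mulmx0 !(dot0l, add0r, addr0, subr0) => /eqP.
  by rewrite dot_self_eq0 subr_eq0 => /eqP.
have [|mu vE] := orthogonal_ker_range (A := A)
  (v := blk2 f + Z^T *m blk1 e + G *m blk2 e + blk3 e + B *m blk4 e).
  by move=> w /(orth 0 w 0 0 0); rewrite mulmx0 !(dot0l, add0r, subr0).
by exists (- mu); rewrite vE mulmxN subrr.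
Qed.

End PortDirac.

Section RowProjection.
Variables (F : fieldType) (r k : nat) (C : 'M[F]_(r, k)).

Definition rowproj : 'M[F]_k := C^T *m invmx (C *m C^T) *m C.

Lemma rowproj_range l (A : 'M[F]_(l, k)) (p : 'cV[F]_k) :
  (C <= A)%MS -> exists mu, rowproj *m p = A^T *m mu.
Proof.
rewrite /rowproj => /submxP[S ->].
exists (S^T *m invmx (S *m A *m (S *m A)^T) *m (S *m A) *m p).
by rewrite trmx_mul !mulmxA.
Qed.

Lemma rowproj_ker l (A : 'M[F]_(l, k)) (w : 'cV[F]_k) :
  (C <= A)%MS -> A *m w = 0 -> rowproj *m w = 0.
Proof. by rewrite /rowproj => /submxP[S ->] Aw0; rewrite -!mulmxA Aw0 !mulmx0. Qed.

Hypothesis unitCC : C *m C^T \in unitmx.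

Lemma mulmx_rowproj l (A : 'M[F]_(l, k)) : (A <= C)%MS -> A *m rowproj = A.
Proof.
case/submxP=> X ->; rewrite /rowproj !mulmxA -(mulmxA X C) -(mulmxA X).
by rewrite mulmxV // mulmx1.
Qed.

Lemma rowproj_mul_tr l (A : 'M[F]_(l, k)) : (A <= C)%MS -> rowproj *m A^T = A^T.
Proof.
case/submxP=> X ->; rewrite trmx_mul /rowproj !mulmxA -(mulmxA _ C).
by rewrite -(mulmxA C^T) mulVmx // mulmx1.
Qed.

End RowProjection.

Section PortChart.
Variables (R : realType) (n k m l r : nat).
Variables (A : 'M[R]_(l, k)) (B : 'M[R]_(k, m)) (G : 'M[R]_k) (Z : 'M[R]_(n, k)).
Local Notation V := 'cV[R]_(n + k + k + m).

(* The second coordinate of [z] is split by [Q] into a kernel part, the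
   velocity, and a range part, the constraint force. *)
Definition port_chart (Q : 'M[R]_k) (z : V) : V * V :=
  port_elt B G Z (blk1 z) ((1%:M - Q) *m blk2 z) (blk3 z) (blk4 z) (Q *m blk2 z).

Lemma port_chart_linear (Q : 'M[R]_k) (a : R) (z1 z2 : V) :
  port_chart Q (a *: z1 + z2) =
  (a *: (port_chart Q z1).1 + (port_chart Q z2).1,
   a *: (port_chart Q z1).2 + (port_chart Q z2).2).
Proof.
rewrite -[z1]col_mx4K -[z2]col_mx4K col_mx4P /port_chart /port_elt /=.
rewrite !blk_col_mx4 !col_mx4P; congr (col_mx4 _ _ _ _, _).
all: rewrite !mulmxDr -!scalemxAr ?mulmxDr -?scalemxAr //.
by apply/matrixP => i j; rewrite !mxE; ring.
Qed.

Lemma port_chart_inj (Q : 'M[R]_k) : injective (port_chart Q).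
Proof.
move=> z1 z2 [f12 e12]; move/(congr1 (@blk2 _ _ _ _ _)): f12.
move: (congr1 (@blk1 _ _ _ _ _) e12) (congr1 (@blk2 _ _ _ _ _) e12).
move: (congr1 (@blk3 _ _ _ _ _) e12) (congr1 (@blk4 _ _ _ _ _) e12).
rewrite !blk_col_mx4 => E3 E4 E1 E2; rewrite E1 E2 E3 E4 => /oppr_inj/addrI E5.
rewrite -[z1]col_mx4K -[z2]col_mx4K E1 E3 E4; congr col_mx4.
by rewrite -[blk2 z1]mul1mx -[blk2 z2]mul1mx -(subrK Q 1%:M) mulmxDl E2 E5 -mulmxDl.
Qed.

Variable C : 'M[R]_(r, k).
Hypotheses (eqAC : (A == C)%MS) (unitCC : C *m C^T \in unitmx).
Local Notation Q := (rowproj C).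

Lemma port_chart_in z : port_Dmx A B G Z (port_chart Q z).
Proof.
have /andP[subAC subCA] := eqAC.
have [mu muE] := rowproj_range (blk2 z) subCA.
apply/port_DmxP; exists (blk1 z), ((1%:M - Q) *m blk2 z), (blk3 z), (blk4 z), mu.
by rewrite mulmxA mulmxBr mulmx1 mulmx_rowproj // subrr mul0mx /port_chart muE.
Qed.

Lemma port_chart_surj p : port_Dmx A B G Z p -> exists z, port_chart Q z = p.
Proof.
have /andP[subAC subCA] := eqAC.
move=> /port_DmxP[t1 [w [tR [tx [mu [Aw0 ->]]]]]].
have Qw0 : Q *m w = 0 := rowproj_ker subCA Aw0.
have QAt : Q *m (A^T *m mu) = A^T *m mu by rewrite mulmxA rowproj_mul_tr.
exists (col_mx4 t1 (w + A^T *m mu) tR tx).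
by rewrite /port_chart !blk_col_mx4 mulmxBl mul1mx mulmxDr Qw0 QAt add0r addrK.
Qed.

End PortChart.

Section MatrixLimits.
Context (R : numFieldType) (T : Type) (F : set_system T) {FF : Filter F}.

Lemma cvg_mxP m n (f : T -> 'M[R]_(m, n)) (M : 'M[R]_(m, n)) :
  f x @[x --> F] --> M <-> forall i j, f x i j @[x --> F] --> M i j.
Proof.
split=> [fM i j|fM S /= [P MP PS]].
  exact: (continuous_cvg _ (@coord_continuous _ _ _ i j M) fM).
apply: (filterS (P := fun x => forall i j, P i j (f x i j))) => [x Px|].
  exact: PS.
by apply: filter_forall => i; apply: filter_forall => j; apply: fM (MP i j).
Qed.

Lemma cvg_sumr (I : Type) (r : seq I) (P : pred I) (f : I -> T -> R) (a : I -> R) :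
  (forall i, P i -> f i x @[x --> F] --> a i) ->
  \sum_(i <- r | P i) f i x @[x --> F] --> \sum_(i <- r | P i) a i.
Proof. by apply: cvg_big => //; exact: add_continuous. Qed.

Lemma cvg_prodr (I : Type) (r : seq I) (P : pred I) (f : I -> T -> R) (a : I -> R) :
  (forall i, P i -> f i x @[x --> F] --> a i) ->
  \prod_(i <- r | P i) f i x @[x --> F] --> \prod_(i <- r | P i) a i.
Proof. by apply: cvg_big => //; exact: mul_continuous. Qed.

Lemma cvg_mulmx m n p (f : T -> 'M[R]_(m, n)) (g : T -> 'M[R]_(n, p))
    (M : 'M[R]_(m, n)) (N : 'M[R]_(n, p)) :
  f x @[x --> F] --> M -> g x @[x --> F] --> N -> f x *m g x @[x --> F] --> M *m N.
Proof.
move=> /cvg_mxP fM /cvg_mxP gN; apply/cvg_mxP => i j; rewrite mxE.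
under eq_fun do rewrite mxE.
by apply: cvg_sumr => k _; apply: cvgM.
Qed.

Lemma cvg_trmx m n (f : T -> 'M[R]_(m, n)) (M : 'M[R]_(m, n)) :
  f x @[x --> F] --> M -> (f x)^T @[x --> F] --> M^T.
Proof.
move=> /cvg_mxP fM; apply/cvg_mxP => i j; rewrite mxE.
by under eq_fun do rewrite mxE; apply: fM.
Qed.

Lemma cvg_col_mx m1 m2 n (f : T -> 'M[R]_(m1, n)) (g : T -> 'M[R]_(m2, n))
    (M : 'M[R]_(m1, n)) (N : 'M[R]_(m2, n)) :
  f x @[x --> F] --> M -> g x @[x --> F] --> N ->
  col_mx (f x) (g x) @[x --> F] --> col_mx M N.
Proof.
move=> /cvg_mxP fM /cvg_mxP gN; apply/cvg_mxP => i j.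
rewrite -(fintype.splitK i); case: (fintype.split i) => i' /=.
  by rewrite col_mxEu; under eq_fun do rewrite col_mxEu; apply: fM.
by rewrite col_mxEd; under eq_fun do rewrite col_mxEd; apply: gN.
Qed.

Lemma cvg_det n (f : T -> 'M[R]_n) (M : 'M[R]_n) :
  f x @[x --> F] --> M -> \det (f x) @[x --> F] --> \det M.
Proof.
move=> /cvg_mxP fM; rewrite /determinant.
apply: cvg_sumr => s _; apply: cvgM; first exact: cvg_cst.
by apply: cvg_prodr => i _; apply: fM.
Qed.

Lemma cvg_adj n (f : T -> 'M[R]_n) (M : 'M[R]_n) :
  f x @[x --> F] --> M -> \adj (f x) @[x --> F] --> \adj M.
Proof.
move=> /cvg_mxP fM; apply/cvg_mxP => i j; rewrite mxE.
under eq_fun do rewrite mxE.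
apply: cvgM; first exact: cvg_cst.
apply: cvg_det; apply/cvg_mxP => a b; rewrite !mxE.
by under eq_fun do rewrite !mxE; apply: fM.
Qed.

Lemma cvg_invmx n (f : T -> 'M[R]_n) (M : 'M[R]_n) : M \in unitmx ->
  f x @[x --> F] --> M -> invmx (f x) @[x --> F] --> invmx M.
Proof.
move=> unitM fM; have detM : \det M != 0 by rewrite -unitfE -unitmxE.
have f_unit : \forall x \near F, f x \in unitmx.
  apply: filterS (cvgr_neq0 _ (cvg_det fM) detM) => x.
  by rewrite unitmxE unitfE.
apply: cvg_trans (near_eq_cvg _) _.
  by apply: filterS f_unit => x fx_unit; rewrite /invmx fx_unit.
rewrite /invmx unitM; apply: cvgZ; last exact: cvg_adj.
by apply: cvgV => //; apply: cvg_det.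
Qed.

Lemma cvg_rowproj r k (f : T -> 'M[R]_(r, k)) (C : 'M[R]_(r, k)) :
  C *m C^T \in unitmx ->
  f x @[x --> F] --> C -> rowproj (f x) @[x --> F] --> rowproj C.
Proof.
move=> unitCC fC; have fCt := cvg_trmx fC.
exact: cvg_mulmx (cvg_mulmx fCt (cvg_invmx unitCC (cvg_mulmx fC fCt))) fC.
Qed.

End MatrixLimits.

Lemma continuous_usubmx (R : numFieldType) m1 m2 n :
  continuous (usubmx : 'M[R]_(m1 + m2, n) -> 'M[R]_(m1, n)).
Proof.
move=> M; apply/(@cvg_mxP _ _ (nbhs M)) => i j; rewrite mxE.
by under eq_fun do rewrite mxE; apply: coord_continuous.
Qed.

Lemma continuous_dsubmx (R : numFieldType) m1 m2 n :
  continuous (dsubmx : 'M[R]_(m1 + m2, n) -> 'M[R]_(m2, n)).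
Proof.
move=> M; apply/(@cvg_mxP _ _ (nbhs M)) => i j; rewrite mxE.
by under eq_fun do rewrite mxE; apply: coord_continuous.
Qed.

Lemma continuous_in_comp_open (X Y Y' : topologicalType) (U : set Y)
    (g : X -> Y) (f : Y -> Y') :
  open U -> continuous g -> {within U, continuous f} ->
  {in g @^-1` U, continuous (f \o g)}.
Proof.
move=> U_open cg; rewrite continuous_open_subspace // => cf x /set_mem U_gx.
by apply: continuous_comp; [exact: cg | exact: cf (mem_set U_gx)].
Qed.

Lemma local_row_frame (R : realType) (X : topologicalType) (W : set X) l k
    (A : X -> 'M[R]_(l, k)) r :
  open W -> {in W, continuous A} -> (forall y, W y -> \rank (A y) = r) ->
  forall y0, W y0 -> exists s (S : 'M[R]_(s, l)) (U : set X),
  [/\ open U, U y0, U `<=` W &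
      forall y, U y -> (A y == S *m A y)%MS /\ S *m A y *m (S *m A y)^T \in unitmx].
Proof.
move=> W_open cA rkA y0 W_y0.
have /submxP[S rbE] : (row_base (A y0) <= A y0)%MS by rewrite eq_row_base.
pose gram_det y := \det (S *m A y *m (S *m A y)^T).
have cdet : {in W, continuous gram_det}.
  move=> y W_y; have cSA : S *m A x @[x --> y] --> S *m A y.
    by apply: cvg_mulmx; [exact: cvg_cst | exact: cA].
  exact: cvg_det (cvg_mulmx cSA (cvg_trmx cSA)).
exists _, S, (W `&` gram_det @^-1` [set x | x != 0]); split.
- exact: (continuous_inP _ W_open).1 cdet _ (@open_neq R 0).
- by split=> //; rewrite /= /gram_det -unitfE -unitmxE gram_unit -rbE row_base_free.
- by move=> y [].
move=> y [W_y]; rewrite /= /gram_det -unitfE -unitmxE => unit_y; split=> //.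
by apply: eqmx_gram_unit unit_y; rewrite !rkA.
Qed.

Lemma cvg_port_chart (R : realType) (T : Type) (F : set_system T) {FF : Filter F}
    n k m (fB : T -> 'M[R]_(k, m)) (fG : T -> 'M[R]_k) (fZ : T -> 'M[R]_(n, k))
    (fQ : T -> 'M[R]_k) (B : 'M[R]_(k, m)) (G : 'M[R]_k) (Z : 'M[R]_(n, k))
    (Q : 'M[R]_k) (z : 'cV[R]_(n + k + k + m)) :
  fB x @[x --> F] --> B -> fG x @[x --> F] --> G ->
  fZ x @[x --> F] --> Z -> fQ x @[x --> F] --> Q ->
  port_chart (fB x) (fG x) (fZ x) (fQ x) z @[x --> F] --> port_chart B G Z Q z.
Proof.
move=> fBB fGG fZZ fQQ; rewrite /port_chart /port_elt /col_mx4.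
have cvgP : (1%:M - fQ x) *m blk2 z @[x --> F] --> (1%:M - Q) *m blk2 z.
  exact: cvg_mulmx (cvgB (cvg_cst _) fQQ) (cvg_cst _).
apply: (cvg_pair (G := nbhs _) (H := nbhs _)).
  apply: cvg_col_mx; last exact: cvg_mulmx (cvg_trmx fBB) cvgP.
  apply: cvg_col_mx; last exact: cvgP.
  apply: cvg_col_mx; first exact: cvg_mulmx fZZ cvgP.
  exact: cvgN (cvgD (cvgD (cvgD (cvgD
    (cvg_mulmx (cvg_trmx fZZ) (cvg_cst _)) (cvg_mulmx fGG cvgP)) (cvg_cst _))
    (cvg_mulmx fBB (cvg_cst _))) (cvg_mulmx fQQ (cvg_cst _))).
apply: cvg_col_mx; last exact: cvg_cst.
apply: cvg_col_mx; last exact: cvg_cst.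
by apply: cvg_col_mx; first exact: cvg_cst.
Qed.

Theorem proposition2 (R : realType) (npot nkin m l : nat)
    (Upos : set 'cV[R]_npot)
    (A : 'cV[R]_npot -> 'M[R]_(l, nkin)) (B : 'cV[R]_npot -> 'M[R]_(nkin, m))
    (G : 'cV[R]_nkin -> 'M[R]_nkin) (Z : 'cV[R]_npot -> 'M[R]_(npot, nkin)) :
  open Upos ->
  {within Upos, continuous A} ->
  {within Upos, continuous B} ->
  continuous G ->
  {within Upos, continuous Z} ->
  (exists r : nat, forall zeta, Upos zeta -> \rank (A zeta) = r) ->
  (forall Gam, (G Gam)^T = - G Gam) ->
  modulated_dirac
    [set x : 'cV[R]_(npot + nkin) | Upos (usubmx x)]
    (fun x => port_D A B G Z (usubmx x) (dsubmx x)).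
Proof.
move=> Upos_open cA cB cG cZ [r rkA] skewG y0 W_y0.
split; first exact: port_Dmx_dirac (skewG _).
set W := [set y | Upos (usubmx y)] in W_y0 *.
have W_open : open W by apply: open_comp Upos_open => y _; apply: continuous_usubmx.
have on_W p q (M : 'cV[R]_npot -> 'M[R]_(p, q)) :
    {within Upos, continuous M} -> {in W, continuous (M \o usubmx)}.
  by apply: continuous_in_comp_open => //; apply: continuous_usubmx.
have [s [S [U [U_open U_y0 sUW frameU]]]] :=
  local_row_frame W_open (on_W _ _ _ cA) (fun y => rkA (usubmx y)) W_y0.
exists U, (fun y => port_chart (B (usubmx y)) (G (dsubmx y)) (Z (usubmx y))
                      (rowproj (S *m A (usubmx y)))).
split=> //; split=> [y /frameU[eqAC unit_y] | z].
  split; [exact: port_chart_linear | exact: port_chart_in eqAC unit_y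
         | exact: port_chart_inj | exact: port_chart_surj eqAC unit_y].
rewrite continuous_open_subspace // => y /set_mem U_y.
have [_ unit_y] := frameU y U_y; have W_y := mem_set (sUW y U_y).
apply: (cvg_port_chart (F := nbhs y)).
- exact: on_W _ _ _ cB y W_y.
- by apply: continuous_comp; [apply: continuous_dsubmx | apply: cG].
- exact: on_W _ _ _ cZ y W_y.
- exact: cvg_rowproj unit_y (cvg_mulmx (cvg_cst S) (on_W _ _ _ cA y W_y)).
Qed.
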